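(* For every $d\in\mathbb{N}$ there exist non-empty families $\mathcal{F}_1,\dots,\mathcal{F}_{3d-1}$ of axis-parallel boxes in $\mathbb{R}^d$ such that (i) every colorful $(3d-1)$-tuple is $2$-pierceable, and (ii) for each $i\in[3d-1]$, $\mathcal{F}_i$ is not $2$-pierceable.
   Context: An axis-parallel box in $\mathbb{R}^d$ is a set $[\alpha_1,\beta_1]\times\dots\times[\alpha_d,\beta_d]$ with real $\alpha_j\le\beta_j$. A family is $2$-pierceable if some set of at most $2$ points meets every member. A colorful $(3d-1)$-tuple from $\mathcal{F}_1,\dots,\mathcal{F}_{3d-1}$ is a tuple containing exactly one member from each family (with distinct family indices). *)

From Stdlib Require Import Reals.
From mathcomp Require Import all_boot.
Set Implicit Arguments. Unset Strict Implicit. Unset Printing Implicit Defensive.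
Open Scope R_scope.

Definition point (d : nat) := 'I_d -> R.

Record box (d : nat) := Box {
  lo : 'I_d -> R;
  hi : 'I_d -> R;
  lo_le_hi : forall j, lo j <= hi j }.

Definition in_box (d : nat) (x : point d) (B : box d) : Prop :=
  forall j : 'I_d, lo B j <= x j <= hi B j.

Definition boxfam (d : nat) := box d -> Prop.

(* Some set of at most 2 points meets every member (two possibly equal points). *)
Definition pierceable2 (d : nat) (F : boxfam d) : Prop :=
  exists p q : point d, forall B, F B -> in_box p B \/ in_box q B.

Definition nonempty_family (d : nat) (F : boxfam d) : Prop := exists B, F B.

Definition tuple_family (d n : nat) (t : 'I_n -> box d) : boxfam d :=
  fun B => exists i, B = t i.

Arguments boxfam d : clear implicits.
Arguments point d : clear implicits.

From Stdlib Require Import Reals.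
From mathcomp Require Import all_boot zify.
Set Implicit Arguments. Unset Strict Implicit. Unset Printing Implicit Defensive.
Local Open Scope nat_scope.

(* Take a cycle of odd length m (m = 3d - 2 or 3d - 1) of boxes in R^d in which exactly
   the consecutive boxes are disjoint: each of the first d - 1 coordinates separates three
   consecutive edges of the cycle, the last coordinate the remaining ones.  Two points can
   only pierce a family whose disjointness graph is bipartite, so an odd cycle is not
   2-pierceable.  The first m - 1 families are this cycle; each of the remaining 3d - m
   families consists of three pairwise disjoint boxes, a cycle of length 3.  A colourful
   tuple takes at most m - 1 boxes from the long cycle, so it misses some vertex s and the
   remaining path is properly 2-coloured by parity; each triangle box lies in the low or
   the high half of the last coordinate and takes the colour of the class it meets.  By
   Helly's theorem for boxes each colour class then has a common point. *)

Definition boxes_meet d (B B' : box d) : Prop :=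
  forall j, Rle (lo B j) (hi B' j) /\ Rle (lo B' j) (hi B j).

Lemma boxes_meetC d (B B' : box d) : boxes_meet B B' -> boxes_meet B' B.
Proof. by move=> meet j; have [] := meet j. Qed.

Lemma boxes_meet_refl d (B : box d) : boxes_meet B B.
Proof. by move=> j; split; apply: lo_le_hi. Qed.

Lemma in_box_meet d (x : point d) (B B' : box d) :
  in_box x B -> in_box x B' -> boxes_meet B B'.
Proof.
move=> xB xB' j; have [loB hiB] := xB j; have [loB' hiB'] := xB' j.
by split; [apply: Rle_trans loB hiB' | apply: Rle_trans loB' hiB].
Qed.

(* Helly's theorem for boxes: the largest lower corner is a common point. *)
Lemma boxes_common_point d (I : finType) (P : pred I) (t : I -> box d) :
  (forall i i', P i -> P i' -> boxes_meet (t i) (t i')) ->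
  exists x : point d, forall i, P i -> in_box x (t i).
Proof.
move=> meet; have [i0 Pi0 | noP] := pickP P; last first.
  by exists (fun=> R0) => i; rewrite noP.
pose top j := foldr (fun i y => if P i then Rmax (lo (t i) j) y else y) (lo (t i0) j).
exists (fun j => top j (enum I)) => i Pi j; split.
- have : i \in enum I by rewrite mem_enum.
  elim: (enum I) => //= i' s IH; rewrite inE => /orP[/eqP<- | /IH le_top].
    by rewrite Pi; apply: Rmax_l.
  by case: (P i') => //; apply: Rle_trans le_top (Rmax_r _ _).
- elim: (enum I) => /= [|i' s IH]; first by have [] := meet i0 i Pi0 Pi j.
  case Pi': (P i') => //; apply: Rmax_lub => //.
  by have [] := meet i' i Pi' Pi j.
Qed.

Lemma pierceable2_of_colouring d n (t : 'I_n -> box d) (c : 'I_n -> bool) :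
  (forall i i', c i = c i' -> boxes_meet (t i) (t i')) -> pierceable2 (tuple_family t).
Proof.
move=> meet.
have [p pP] : exists p, forall i, c i -> in_box p (t i).
  by apply: boxes_common_point => i i' ci ci'; apply: meet; rewrite ci ci'.
have [q qP] : exists q, forall i, ~~ c i -> in_box q (t i).
  by apply: boxes_common_point => i i' /negbTE ci /negbTE ci'; apply: meet; rewrite ci ci'.
exists p, q => _ [i ->].
by case ci: (c i); [left; apply: pP | right; apply: qP; rewrite ci].
Qed.

Lemma pierce_alternates d (C : nat -> box d) (p q : point d) m :
  (forall j, j < m -> in_box p (C j) \/ in_box q (C j)) ->
  (forall j, j.+1 < m -> ~ boxes_meet (C j) (C j.+1)) ->
  in_box p (C 0) -> forall j, j < m -> in_box (if odd j then q else p) (C j).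
Proof.
move=> cover apart pC0; elim=> [//|j IH] lt_j /=.
have := IH (ltnW lt_j); case: (cover _ lt_j); case: (odd j) => //= pierced prev;
by case: (apart j lt_j); apply: in_box_meet prev pierced.
Qed.

Lemma odd_cycle_not_pierceable2 d (F : boxfam d) (C : nat -> box d) m :
  odd m -> (forall j, j < m -> F (C j)) ->
  (forall j, j.+1 < m -> ~ boxes_meet (C j) (C j.+1)) ->
  ~ boxes_meet (C m.-1) (C 0) -> ~ pierceable2 F.
Proof.
move=> odd_m inF apart wrap [p [q pierce]].
have m_gt0 := odd_gt0 odd_m.
have lt_last : m.-1 < m by rewrite prednK.
have even_last : odd m.-1 = false by move: odd_m; rewrite -(prednK m_gt0) oddS => /negbTE.
have cover j : j < m -> in_box p (C j) \/ in_box q (C j) by move=> /inF /pierce.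
have cover' j : j < m -> in_box q (C j) \/ in_box p (C j) by move=> /cover [] ?; auto.
case: (cover 0 m_gt0) => [pC0 | qC0]; apply: wrap.
- by have := pierce_alternates cover apart pC0 lt_last; rewrite even_last => /in_box_meet; apply.
- by have := pierce_alternates cover' apart qC0 lt_last; rewrite even_last => /in_box_meet; apply.
Qed.

Lemma exists_unused (g : nat -> nat) n : exists2 s, s <= n & forall i, i < n -> g i != s.
Proof.
have [/allP all_hit | /allPn[s]] := boolP (all (mem (map g (iota 0 n))) (iota 0 n.+1)).
  have := uniq_leq_size (iota_uniq 0 n.+1) all_hit.
  by rewrite size_map !size_iota ltnn.
rewrite mem_iota => s_le s_new; exists s => // i lt_i; apply: contraNneq s_new => <-.
by apply: map_f; rewrite mem_iota.
Qed.

Definition itv_meet (I J : nat * nat) : bool :=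
  (minn I.1 I.2 <= maxn J.1 J.2) && (minn J.1 J.2 <= maxn I.1 I.2).

Lemma itv_meetC I J : itv_meet I J = itv_meet J I.
Proof. by rewrite /itv_meet andbC. Qed.

Lemma INR_min_le_max (I : nat * nat) : Rle (INR (minn I.1 I.2)) (INR (maxn I.1 I.2)).
Proof. by apply/le_INR/leP; rewrite geq_min leq_maxl. Qed.

Definition ibox d (I : nat -> nat * nat) : box d := Box (fun k : 'I_d => INR_min_le_max (I k)).

Lemma ibox_meetP d (I J : nat -> nat * nat) :
  boxes_meet (ibox d I) (ibox d J) <-> forall k, k < d -> itv_meet (I k) (J k).
Proof.
split=> [meet k lt_k | meet j].
- by have [/INR_le/leP le1 /INR_le/leP le2] := meet (Ordinal lt_k); apply/andP.
- by have /andP[le1 le2] := meet j (ltn_ord j); split; apply/le_INR/leP.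
Qed.

Definition full_itv := (0, 9).
Definition low_itv := (0, 4).
Definition high_itv := (5, 9).

Definition path_itv (p : nat) := nth full_itv [:: (1, 2); (3, 4); (0, 1); (2, 3)] p.

Lemma path_itv_meet p q : ~~ itv_meet (path_itv p) (path_itv q) ->
  (p.+1 == q) && (q < 4) || (q.+1 == p) && (p < 4).
Proof.
by rewrite /path_itv; case: p => [|[|[|[|p]]]]; case: q => [|[|[|[|q]]]] => /=; rewrite ?nth_nil.
Qed.

Lemma path_itv_apart p : p < 3 -> ~~ itv_meet (path_itv p) (path_itv p.+1).
Proof. by rewrite /path_itv; case: p => [|[|[|p]]]. Qed.

Lemma itv_meet_full_path p : itv_meet full_itv (path_itv p).
Proof. by rewrite /path_itv; case: p => [|[|[|[|p]]]] => /=; rewrite ?nth_nil. Qed.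

Lemma itv_meet_low I : maxn I.1 I.2 <= 4 -> itv_meet low_itv I.
Proof. by rewrite /itv_meet /=; lia. Qed.

Lemma itv_meet_high I : 4 < maxn I.1 I.2 -> minn I.1 I.2 <= 9 -> itv_meet high_itv I.
Proof. by rewrite /itv_meet /=; lia. Qed.

Lemma itv_meet_full I : minn I.1 I.2 <= 9 -> itv_meet full_itv I.
Proof. by rewrite /itv_meet /=; lia. Qed.

Section Construction.

Variable L : nat.

Definition cycle_len := (3 * L).+1 + odd L.

Lemma odd_cycle_len : odd cycle_len.
Proof. by rewrite /cycle_len oddD /= oddM /=; case: (odd L). Qed.

Lemma cycle_len_bounds : 3 * L < cycle_len <= (3 * L).+2.
Proof. by rewrite /cycle_len; case: (odd L); lia. Qed.

Definition cycle_succ u := if u == cycle_len.-1 then 0 else u.+1.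

(* Coordinate [k < L] separates the consecutive vertices 3k, 3k+1, 3k+2, 3k+3; the last
   coordinate separates [cycle_len.-1] from 0 and, when L is odd, from [cycle_len.-2]. *)
Definition cycle_itv (u k : nat) : nat * nat :=
  if k < L then (if 3 * k <= u then path_itv (u - 3 * k) else full_itv)
  else if u == cycle_len.-1 then low_itv
  else if (u == 0) || odd L && (u.+2 == cycle_len) then high_itv
  else full_itv.

Definition cycle_box u : box L.+1 := ibox L.+1 (cycle_itv u).

Lemma cycle_itv_apart u u' k : k < L -> ~~ itv_meet (cycle_itv u k) (cycle_itv u' k) ->
  cycle_succ u = u' \/ cycle_succ u' = u.
Proof.
have := cycle_len_bounds; rewrite /cycle_itv /cycle_succ => bounds lt_k; rewrite lt_k.
case: (leqP (3 * k) u) => le_u; case: (leqP (3 * k) u') => le_u';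
  rewrite ?itv_meet_full_path // itv_meetC ?itv_meet_full_path //.
rewrite itv_meetC => /path_itv_meet /orP[] /andP[/eqP e lt4].
- by left; rewrite ifN; lia.
- by right; rewrite ifN; lia.
Qed.

Lemma cycle_itv_last_apart u u' : ~~ itv_meet (cycle_itv u L) (cycle_itv u' L) ->
  cycle_succ u = u' \/ cycle_succ u' = u.
Proof.
rewrite /cycle_itv /cycle_succ ltnn.
case: (u =P cycle_len.-1) => [-> | ne_u]; case: (u' =P cycle_len.-1) => [-> | ne_u'] //.
- by case: ifP => [/orP[/eqP-> | /andP[_ /eqP <-]] | _]; [left | right |].
- by case: ifP => [/orP[/eqP-> | /andP[_ /eqP <-]] | _]; [right | left |].
- by do 2 case: ifP.
Qed.

Lemma cycle_box_meet u u' :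
  cycle_succ u != u' -> cycle_succ u' != u -> boxes_meet (cycle_box u) (cycle_box u').
Proof.
move=> /eqP ne_succ /eqP ne_succ'; apply/ibox_meetP => k; rewrite ltnS leq_eqVlt.
case/orP=> [/eqP-> | lt_k]; apply/negPn/negP.
- by case/cycle_itv_last_apart.
- by case/cycle_itv_apart.
Qed.

Lemma cycle_box_succ_apart u :
  0 < L -> u < cycle_len -> ~ boxes_meet (cycle_box u) (cycle_box (cycle_succ u)).
Proof.
move=> L_gt0 lt_u; rewrite /cycle_succ => /ibox_meetP meet; have := cycle_len_bounds.
case: (ltnP u (3 * L)) => [lt_u3L | ge_u3L] bounds.
- have lt_k : u %/ 3 < L by lia.
  have := meet (u %/ 3) (ltnW lt_k); rewrite /cycle_itv lt_k.
  have -> : (u == cycle_len.-1) = false by lia.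
  have -> : 3 * (u %/ 3) <= u by lia.
  have -> : 3 * (u %/ 3) <= u.+1 by lia.
  have -> : u.+1 - 3 * (u %/ 3) = (u - 3 * (u %/ 3)).+1 by lia.
  by apply/negP/path_itv_apart; lia.
- have := meet L (ltnSn L); rewrite /cycle_itv ltnn.
  case: (u =P cycle_len.-1) => [_ | ne_u] /=.
    by have -> : (0 == cycle_len.-1) = false by lia.
  have [oL ->] : odd L /\ u = 3 * L.
    by move: bounds ne_u lt_u; rewrite /cycle_len; case: (odd L) => /=; lia.
  by rewrite /cycle_len oL /= !addn1 !eqxx orbT.
Qed.

(* A triangle box lies in the low half [0, 4] or the high half [5, 9] of the last
   coordinate; among the cycle boxes it then misses only box 0, resp. box [cycle_len.-1]. *)
Definition tri_last f w : nat * nat :=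
  nth full_itv (if odd L then [:: (5, 5); (7, 7); (9, 9)]
                else if f == 0 then [:: (0, 0); (2, 2); (5, 9)]
                else [:: (0, 2); (5, 5); (9, 9)]) w.

Definition tri_itv (f w k : nat) := if k < L then full_itv else tri_last f w.

Definition tri_box f w : box L.+1 := ibox L.+1 (tri_itv f w).

Definition tri_low f w := maxn (tri_last f w).1 (tri_last f w).2 <= 4.

Lemma tri_last_le9 f w : minn (tri_last f w).1 (tri_last f w).2 <= 9.
Proof.
by rewrite /tri_last; case: (odd L); [|case: (f == 0)]; case: w => [|[|[|w]]] /=; rewrite ?nth_nil.
Qed.

Lemma tri_low_odd f w : odd L -> ~~ tri_low f w.
Proof. by rewrite /tri_low /tri_last => ->; case: w => [|[|[|w]]] /=; rewrite ?nth_nil. Qed.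

Lemma tri_box_apart f w w' :
  w < 3 -> w' < 3 -> w != w' -> ~ boxes_meet (tri_box f w) (tri_box f w').
Proof.
move=> + + + /ibox_meetP/(_ L (ltnSn L)); rewrite /tri_itv /tri_last ltnn.
by case: (odd L); [|case: (f == 0)]; case: w => [|[|[|w]]]; case: w' => [|[|[|w']]] => //.
Qed.

Lemma cycle_tri_box_meet f w u :
  (tri_low f w -> u != 0) -> (~~ tri_low f w -> u != cycle_len.-1) ->
  boxes_meet (cycle_box u) (tri_box f w).
Proof.
move=> low_u high_u; have le9 := tri_last_le9 f w.
apply/ibox_meetP => k; rewrite ltnS leq_eqVlt => /orP[/eqP-> | lt_k]; last first.
  by rewrite /cycle_itv /tri_itv lt_k itv_meetC; case: ifP; rewrite ?itv_meet_full_path.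
rewrite /cycle_itv /tri_itv ltnn; case: ifP => [u_last | _].
  exact/itv_meet_low/(contraLR high_u).
have high : ~~ tri_low f w -> itv_meet high_itv (tri_last f w).
  by rewrite /tri_low -ltnNge => /itv_meet_high; apply.
case: ifP => [/orP[u0 | /andP[/tri_low_odd/high //]] | _]; last exact: itv_meet_full.
exact/high/(contraL low_u).
Qed.

Lemma tri_box_meet w w' :
  ~~ odd L -> tri_low 0 w = tri_low 1 w' -> boxes_meet (tri_box 0 w) (tri_box 1 w').
Proof.
move=> /negbTE even_L; rewrite /tri_low /tri_last even_L => same.
apply/ibox_meetP => k _; rewrite /tri_itv /tri_last even_L; case: ifP => // _.
by move: same; case: w => [|[|[|w]]]; case: w' => [|[|[|w']]] => /=; rewrite ?nth_nil.
Qed.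

(* Parity, flipped past the unused vertex [s]; as the cycle is odd this properly colours
   the path left after deleting [s]. *)
Definition cycle_colour s u := odd u (+) (s < u).

Lemma cycle_colour_last s : s < cycle_len.-1 -> cycle_colour s cycle_len.-1.
Proof.
by move=> lt_s; rewrite /cycle_colour lt_s addbT -oddS prednK ?odd_cycle_len.
Qed.

Lemma cycle_colour_succ s u : s < cycle_len -> u < cycle_len -> u != s ->
  cycle_colour s (cycle_succ u) = ~~ cycle_colour s u.
Proof.
move=> lt_s lt_u ne_us; rewrite /cycle_succ.
case: (u =P cycle_len.-1) => [u_last | _]; last first.
  by rewrite /cycle_colour oddS ltnS leq_eqVlt eq_sym (negbTE ne_us) addNb.
by rewrite u_last cycle_colour_last //; lia.
Qed.

Definition cycle_families := cycle_len.-1.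

Definition member i u :=
  if i < cycle_families then cycle_box u else tri_box (i - cycle_families) u.

Definition family i : boxfam L.+1 :=
  fun B => exists2 u, u < (if i < cycle_families then cycle_len else 3) & B = member i u.

Definition colour s i u :=
  if i < cycle_families then cycle_colour s u else tri_low (i - cycle_families) u.

Lemma members_meet s i i' u u' : i != i' -> i < (3 * L).+2 -> i' < (3 * L).+2 ->
  (i < cycle_families -> u < cycle_len /\ u != s) ->
  (i' < cycle_families -> u' < cycle_len /\ u' != s) ->
  s < cycle_len -> colour s i u = colour s i' u' -> boxes_meet (member i u) (member i' u').
Proof.
move=> ne_ii lt_i lt_i' Vu Vu' lt_s same.
wlog lt_ii : i i' u u' {ne_ii} lt_i lt_i' Vu Vu' same / i < i'.
  move=> sym; case: (ltngtP i i') ne_ii => // lt _; first exact: sym.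
  exact/boxes_meetC/(sym i' i u' u).
move: same Vu Vu'; rewrite /member /colour /cycle_families; have := cycle_len_bounds.
case: (ltnP i cycle_len.-1) => [Vi | Ti]; case: (ltnP i' cycle_len.-1) => [Vi' | Ti'];
  move=> bounds same Vu Vu'.
- have [lt_u ne_u] := Vu isT; have [lt_u' ne_u'] := Vu' isT.
  by apply: cycle_box_meet; apply/eqP => succ; move: same;
    rewrite -succ cycle_colour_succ //; case: cycle_colour.
- have [lt_u ne_u] := Vu isT.
  apply: cycle_tri_box_meet => [tc | /negbTE tc]; apply/eqP => eu; move: same; rewrite eu ?tc //.
  by rewrite cycle_colour_last //; lia.
- by move: lt_ii; lia.
- have [even_L [fi fi']] : ~~ odd L /\ i - cycle_len.-1 = 0 /\ i' - cycle_len.-1 = 1.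
    by move: bounds Ti Ti' lt_i'; rewrite /cycle_len; case: (odd L) => /=; lia.
  by move: same; rewrite fi fi'; apply: tri_box_meet.
Qed.

Lemma family_not_pierceable2 i : ~ pierceable2 (family i).
Proof.
rewrite /family /member /cycle_families; case: ifP => [Vi | _].
- have L_gt0 : 0 < L by rewrite lt0n; apply/eqP => L0; move: Vi; rewrite /cycle_len L0.
  have lt_last : cycle_len.-1 < cycle_len by rewrite prednK // odd_gt0 // odd_cycle_len.
  apply: (odd_cycle_not_pierceable2 (C := cycle_box) odd_cycle_len) => [j lt_j | j lt_j | ].
  + by exists j.
  + by have := cycle_box_succ_apart L_gt0 (ltnW lt_j); rewrite /cycle_succ ifN //; lia.
  + by have := cycle_box_succ_apart L_gt0 lt_last; rewrite /cycle_succ eqxx.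
- apply: (odd_cycle_not_pierceable2 (C := tri_box (i - cycle_len.-1)) (isT : odd 3))
    => [w lt_w | w lt_w | ].
  + by exists w.
  + by apply: tri_box_apart; lia.
  + exact: tri_box_apart.
Qed.

Lemma colourful_pierceable2 (t : 'I_(3 * L.+1 - 1) -> box L.+1) :
  (forall i : 'I_(3 * L.+1 - 1), family i (t i)) -> pierceable2 (tuple_family t).
Proof.
move=> /fin_all_exists2[u u_lt tE].
pose g n := nth 0 [seq u i | i <- enum 'I_(3 * L.+1 - 1)] n.
have g_u (i : 'I_(3 * L.+1 - 1)) : g i = u i.
  by rewrite /g (nth_map i) ?size_enum_ord // nth_ord_enum.
have [s le_s s_unused] := exists_unused g cycle_families.
have lt_s : s < cycle_len by move: le_s; rewrite /cycle_families; have := cycle_len_bounds; lia.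
have Vu (i : 'I_(3 * L.+1 - 1)) : i < cycle_families -> u i < cycle_len /\ u i != s.
  by move=> Vi; have := u_lt i; rewrite Vi -g_u; split; last exact: s_unused.
have lt_ord (i : 'I_(3 * L.+1 - 1)) : i < (3 * L).+2 by have := ltn_ord i; lia.
apply: (pierceable2_of_colouring (c := fun i => colour s i (u i))) => i i' same.
rewrite !tE; have [-> | ne_ii] := eqVneq i i'; first exact: boxes_meet_refl.
exact: members_meet ne_ii (lt_ord i) (lt_ord i') (Vu i) (Vu i') lt_s same.
Qed.

End Construction.

Theorem theorem9 : forall d : nat,
  exists F : 'I_(3 * d - 1)%N -> boxfam d,
    (forall i, nonempty_family (F i)) /\
    (forall t : 'I_(3 * d - 1)%N -> box d,
        (forall i, F i (t i)) -> pierceable2 (tuple_family t)) /\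
    (forall i, ~ pierceable2 (F i)).
Proof.
case=> [|L].
  exists (fun _ _ => True); split; [|split] => [[] // | t _ | [] //].
  by exists (fun=> R0), (fun=> R0) => B [[]].
exists (fun i => family i); split; [|split].
- by move=> i; exists (member L i 0), 0 => //; case: ifP.
- exact: colourful_pierceable2.
- move=> i; exact: family_not_pierceable2.
Qed.
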